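(* Let $a\le n$, $k\in\mathbb Z$, and $u,w\in S_{[a,n]}$ with $u\xrightarrow{k}w$. If $i\in u((k,n])$ and $i\notin\mathrm{fix}_{(k,n]}(u,w)$, then there exists $t\in[a,k]$ with $w(t)\ge i$.
   Context: $S_{[a,n]}$ is the set of bijections of $\mathbb Z$ fixing every integer outside $[a,n]$; $\tau_{i,j}$ is the transposition of $i<j$, $u\tau_{i,j}=u\circ\tau_{i,j}$, $\ell(u)$ is the number of inversions. $u\lessdot_k u\tau_{i,j}$ if $i\le k<j$ and $\ell(u\tau_{i,j})=\ell(u)+1$. $u\xrightarrow{k}w$ means there is a chain $u=v_1\lessdot_k\cdots\lessdot_k v_s=w$ ($s\ge1$), $v_{t+1}=v_t\tau_{i_t,j_t}$, with $v_1(i_1)<\cdots<v_{s-1}(i_{s-1})$. For $I\subseteq\mathbb Z$, $\mathrm{fix}_I(u,w)=\{u(t):t\in I,\ u(t)=w(t)\}$. *)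

From Stdlib Require Import ZArith List Lia.
Import ListNotations.
Open Scope Z_scope.

Definition bijZ (u : Z -> Z) : Prop :=
  exists v : Z -> Z, (forall x, v (u x) = x) /\ (forall x, u (v x) = x).

Definition fixes_outside (lo hi : Z) (u : Z -> Z) : Prop :=
  forall t, t < lo \/ hi < t -> u t = t.

Definition in_S (a n : Z) (u : Z -> Z) : Prop := bijZ u /\ fixes_outside a n u.

Definition tau (i j : Z) (x : Z) : Z :=
  if Z.eqb x i then j else if Z.eqb x j then i else x.

Definition rmul_tau (u : Z -> Z) (i j : Z) : Z -> Z := fun x => u (tau i j x).

Definition inv_count (lo hi : Z) (u : Z -> Z) : nat :=
  let N := Z.to_nat (hi - lo + 1) in
  length (filter (fun pq : nat * nat =>
            let p := lo + Z.of_nat (fst pq) in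
            let q := lo + Z.of_nat (snd pq) in
            andb (Z.ltb p q) (Z.ltb (u q) (u p)))
          (list_prod (seq 0 N) (seq 0 N))).

(* ell(u) = L: u is a bijection of Z with finite support, and counting the
   inversions in any window [lo,hi] containing the support gives L (this count
   equals the total number of inversions, since u permutes such a window). *)
Definition length_is (u : Z -> Z) (L : nat) : Prop :=
  bijZ u /\ exists lo hi, fixes_outside lo hi u /\ inv_count lo hi u = L.

Definition kcover (k : Z) (u : Z -> Z) (i j : Z) : Prop :=
  i <= k < j /\
  exists L, length_is u L /\ length_is (rmul_tau u i j) (S L).

(* kchain k u w m : there is a chain u = v_1 <._k ... <._k v_s = w with
   v_{t+1} = v_t tau_{i_t,j_t}, m < v_1(i_1) < ... < v_{s-1}(i_{s-1}). *)
Inductive kchain (k : Z) : (Z -> Z) -> (Z -> Z) -> Z -> Prop :=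
| kchain_refl : forall u m, kchain k u u m
| kchain_step : forall u w m i j,
    kcover k u i j -> m < u i ->
    kchain k (rmul_tau u i j) w (u i) -> kchain k u w m.

Definition karrow (k : Z) (u w : Z -> Z) : Prop := exists m, kchain k u w m.

Definition in_fix_oc (lo hi : Z) (u w : Z -> Z) (x : Z) : Prop :=
  exists t, lo < t <= hi /\ u t = w t /\ u t = x.

(* A k-cover u ⋖_k u τ_{i,j} with i <= k < j must have u(i) < u(j), since
   swapping a decreasing pair strictly lowers the number of inversions.  Hence
   along a k-chain the value at every position <= k can only grow.  A value
   u(p) sitting at a position p > k that is not fixed by the chain must leave p
   at the first step touching p, which moves it to some position q <= k; from
   then on the value at q only grows, so w(q) >= u(p).  Finally q >= a because
   w fixes every position below a while u(p) is at least a or p itself. *)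
From Stdlib Require Import ZArith List Lia.
Open Scope Z_scope.

Lemma NoDup_list_prod {A B : Type} (l : list A) (l' : list B) :
  NoDup l -> NoDup l' -> NoDup (list_prod l l').
Proof.
  intros Hl Hl'. induction Hl as [|x l Hx Hl IH]; simpl; [constructor|].
  apply NoDup_app; auto.
  - apply NoDup_map_NoDup_ForallPairs; auto.
    intros y y' _ _ E. now inversion E.
  - intros [x' y] Hin Hin'. apply in_map_iff in Hin as [z [Ez _]].
    inversion Ez; subst. apply in_prod_iff in Hin' as [Hin' _]. contradiction.
Qed.

Definition inversions (lo hi : Z) (u : Z -> Z) : list (Z * Z) :=
  let N := Z.to_nat (hi - lo + 1) in
  map (fun pq : nat * nat => (lo + Z.of_nat (fst pq), lo + Z.of_nat (snd pq)))
  (filter (fun pq : nat * nat =>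
            let p := lo + Z.of_nat (fst pq) in
            let q := lo + Z.of_nat (snd pq) in
            andb (Z.ltb p q) (Z.ltb (u q) (u p)))
          (list_prod (seq 0 N) (seq 0 N))).

Lemma length_inversions lo hi u : length (inversions lo hi u) = inv_count lo hi u.
Proof. unfold inversions, inv_count. now rewrite length_map. Qed.

Lemma in_inversions lo hi u p q :
  In (p, q) (inversions lo hi u) <-> lo <= p /\ q <= hi /\ p < q /\ u q < u p.
Proof.
  unfold inversions. rewrite in_map_iff. split.
  - intros [[x y] [E H]]. simpl in E. inversion E; subst; clear E.
    apply filter_In in H as [Hxy Htest]. apply in_prod_iff in Hxy as [Hx Hy].
    apply in_seq in Hx, Hy. simpl in Htest.
    apply andb_prop in Htest as [H1 H2]. apply Z.ltb_lt in H1, H2. lia.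
  - intros (H1 & H2 & H3 & H4). exists (Z.to_nat (p - lo), Z.to_nat (q - lo)).
    simpl. split; [f_equal; lia|].
    apply filter_In. split.
    + apply in_prod_iff. split; apply in_seq; lia.
    + simpl. replace (lo + Z.of_nat (Z.to_nat (p - lo))) with p by lia.
      replace (lo + Z.of_nat (Z.to_nat (q - lo))) with q by lia.
      apply andb_true_intro; split; apply Z.ltb_lt; lia.
Qed.

Lemma NoDup_inversions lo hi u : NoDup (inversions lo hi u).
Proof.
  unfold inversions. apply NoDup_map_NoDup_ForallPairs.
  - intros [x y] [x' y'] _ _ E. simpl in E. inversion E. f_equal; lia.
  - apply NoDup_filter, NoDup_list_prod; apply seq_NoDup.
Qed.

Lemma bijZ_inj u x y : bijZ u -> u x = u y -> x = y.
Proof.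
  intros [v [Hvu _]] E. rewrite <- (Hvu x), <- (Hvu y). now rewrite E.
Qed.

Lemma fixes_outside_maps_into lo hi u : bijZ u -> fixes_outside lo hi u ->
  forall x, lo <= x <= hi -> lo <= u x <= hi.
Proof.
  intros B F x Hx.
  destruct (Z_le_gt_dec lo (u x)), (Z_le_gt_dec (u x) hi); try lia;
    assert (E : u (u x) = u x) by (apply F; lia);
    apply bijZ_inj in E; auto; lia.
Qed.

Lemma fixes_outside_ge lo hi u : bijZ u -> fixes_outside lo hi u ->
  forall x, lo <= x -> lo <= u x.
Proof.
  intros B F x Hx. destruct (Z_le_gt_dec x hi).
  - now apply (fixes_outside_maps_into lo hi u B F).
  - rewrite F; lia.
Qed.

Lemma fixes_outside_le lo hi u : bijZ u -> fixes_outside lo hi u ->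
  forall x, x <= hi -> u x <= hi.
Proof.
  intros B F x Hx. destruct (Z_le_gt_dec lo x).
  - now apply (fixes_outside_maps_into lo hi u B F).
  - rewrite F; lia.
Qed.

Lemma inversion_within lo hi u p q : bijZ u -> fixes_outside lo hi u ->
  p < q -> u q < u p -> lo <= p /\ q <= hi.
Proof.
  intros B F Hpq Hinv. split.
  - destruct (Z_le_gt_dec lo p) as [|Hp]; auto. rewrite (F p) in Hinv by lia.
    destruct (Z_le_gt_dec lo q).
    + pose proof (fixes_outside_ge lo hi u B F q). lia.
    + rewrite (F q) in Hinv by lia. lia.
  - destruct (Z_le_gt_dec q hi) as [|Hq]; auto. rewrite (F q) in Hinv by lia.
    destruct (Z_le_gt_dec p hi).
    + pose proof (fixes_outside_le lo hi u B F p). lia.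
    + rewrite (F p) in Hinv by lia. lia.
Qed.

Lemma inv_count_window lo1 hi1 lo2 hi2 u : bijZ u ->
  fixes_outside lo1 hi1 u -> fixes_outside lo2 hi2 u ->
  inv_count lo1 hi1 u = inv_count lo2 hi2 u.
Proof.
  intros B F1 F2.
  assert (Hincl : forall lo hi lo' hi', fixes_outside lo' hi' u ->
            incl (inversions lo hi u) (inversions lo' hi' u)).
  { intros lo hi lo' hi' F' [p q] Hin. apply in_inversions in Hin.
    apply in_inversions.
    destruct (inversion_within lo' hi' u p q B F'); lia. }
  rewrite <- !length_inversions. apply Nat.le_antisymm;
    apply NoDup_incl_length; auto using NoDup_inversions.
Qed.

Ltac destruct_tests :=
  unfold tau in *;
  repeat match goal with
  | |- context [Z.eqb ?a ?b] => destruct (Z.eqb_spec a b)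
  | H : context [Z.eqb ?a ?b] |- _ => destruct (Z.eqb_spec a b)
  | |- context [Z.ltb ?a ?b] => destruct (Z.ltb_spec a b)
  | H : context [Z.ltb ?a ?b] |- _ => destruct (Z.ltb_spec a b)
  end; simpl in *; subst; try lia.

(* Injection from the inversions of u τ_{i,j} into those of u, missing (i,j):
   pairs meeting the open interval (i,j) are kept, the others are moved by τ. *)
Definition swap_pair (i j : Z) (pq : Z * Z) : Z * Z :=
  let (p, q) := pq in
  if orb (andb (Z.ltb i p) (Z.ltb p j)) (andb (Z.ltb i q) (Z.ltb q j)) then (p, q)
  else (tau i j p, tau i j q).

Lemma swap_pair_invol i j pq : i < j -> swap_pair i j (swap_pair i j pq) = pq.
Proof.
  intros Hij. destruct pq as [p q]. unfold swap_pair.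
  destruct (orb (andb (Z.ltb i p) (Z.ltb p j)) (andb (Z.ltb i q) (Z.ltb q j))) eqn:E.
  - now rewrite E.
  - destruct_tests; f_equal; lia.
Qed.

Lemma inv_count_swap_lt lo hi u i j :
  lo <= i -> i < j -> j <= hi -> u j < u i ->
  (inv_count lo hi (rmul_tau u i j) < inv_count lo hi u)%nat.
Proof.
  intros Hlo Hij Hhi Huij. rewrite <- !length_inversions.
  set (l := map (swap_pair i j) (inversions lo hi (rmul_tau u i j))).
  assert (Hnodup : NoDup ((i, j) :: l)).
  { constructor.
    - unfold l. intros Hin. apply in_map_iff in Hin as [x [Ex Hx]].
      assert (x = swap_pair i j (i, j)) by (rewrite <- Ex, swap_pair_invol; auto).
      subst x. unfold swap_pair in Hx. destruct_tests.
      apply in_inversions in Hx. lia.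
    - unfold l. apply NoDup_map_NoDup_ForallPairs; [|apply NoDup_inversions].
      intros x y _ _ E.
      rewrite <- (swap_pair_invol i j x), <- (swap_pair_invol i j y); auto.
      now rewrite E. }
  assert (Hincl : incl ((i, j) :: l) (inversions lo hi u)).
  { intros [p q] [E | Hin].
    - inversion E; subst. apply in_inversions. lia.
    - unfold l in Hin. apply in_map_iff in Hin as [[x y] [Ex Hx]].
      apply in_inversions in Hx. apply in_inversions. unfold rmul_tau in Hx.
      unfold swap_pair in Ex. destruct Hx as (A1 & A2 & A3 & A4).
      destruct_tests; inversion Ex; subst; lia. }
  pose proof (NoDup_incl_length Hnodup Hincl) as Hlen.
  simpl in Hlen. unfold l in Hlen. rewrite length_map in Hlen. lia.
Qed.

Lemma kcover_lt k u i j : kcover k u i j -> u i < u j.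
Proof.
  intros [Hk [L [[B [lo1 [hi1 [F1 C1]]]] [B' [lo2 [hi2 [F2 C2]]]]]]].
  set (lo := Z.min (Z.min lo1 lo2) i). set (hi := Z.max (Z.max hi1 hi2) j).
  assert (E1 : inv_count lo hi u = L).
  { rewrite <- C1. apply inv_count_window; auto.
    intros t Ht. apply F1. lia. }
  assert (E2 : inv_count lo hi (rmul_tau u i j) = S L).
  { rewrite <- C2. apply inv_count_window; auto.
    intros t Ht. apply F2. lia. }
  destruct (Z.lt_trichotomy (u i) (u j)) as [H|[H|H]]; auto.
  - apply bijZ_inj in H; auto. lia.
  - pose proof (inv_count_swap_lt lo hi u i j) as Hlt.
    rewrite E1, E2 in Hlt. assert (S L < L)%nat by (apply Hlt; lia). lia.
Qed.

Lemma kchain_le k v w m : kchain k v w m -> forall q, q <= k -> v q <= w q.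
Proof.
  induction 1 as [|u w m i j C _ Ch IH]; intros q Hq; [lia|].
  pose proof (kcover_lt _ _ _ _ C) as Hlt. destruct C as [[Hi Hj] _].
  specialize (IH q Hq). unfold rmul_tau, tau in IH.
  destruct (Z.eqb_spec q i); subst; [lia|].
  destruct (Z.eqb_spec q j); lia.
Qed.

Lemma kchain_moved k v w m : kchain k v w m -> forall p, k < p -> v p <> w p ->
  exists q, q <= k /\ v p <= w q.
Proof.
  induction 1 as [|u w m i j C _ Ch IH]; intros p Hp Hne; [congruence|].
  pose proof (kchain_le _ _ _ _ Ch) as Hle.
  destruct C as [[Hi Hj] _].
  destruct (Z.eq_dec p j) as [->|Hpj].
  - exists i. split; [lia|]. specialize (Hle i Hi).
    unfold rmul_tau, tau in Hle. now rewrite Z.eqb_refl in Hle.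
  - assert (E : rmul_tau u i j p = u p).
    { unfold rmul_tau, tau. destruct (Z.eqb_spec p i); [lia|].
      destruct (Z.eqb_spec p j); [lia|]. reflexivity. }
    rewrite <- E. apply IH; [lia|congruence].
Qed.

Theorem lemma2p25 (a n k : Z) (u w : Z -> Z) (i : Z) :
  a <= n -> in_S a n u -> in_S a n w -> karrow k u w ->
  (exists t, k < t <= n /\ u t = i) ->
  ~ in_fix_oc k n u w i ->
  exists t, a <= t <= k /\ w t >= i.
Proof.
  intros Han [Bu Fu] [Bw Fw] [m Ch] [p [Hp <-]] Hnfix.
  assert (Hmoved : u p <> w p) by (intros E; apply Hnfix; exists p; auto).
  destruct (kchain_moved _ _ _ _ Ch p ltac:(lia) Hmoved) as [q [Hq Hw]].
  exists q. repeat split; try lia.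
  destruct (Z_le_gt_dec a q) as [|Hqa]; auto.
  rewrite (Fw q) in Hw by lia.
  destruct (Z_le_gt_dec a p).
  - pose proof (fixes_outside_ge a n u Bu Fu p). lia.
  - rewrite (Fu p) in Hw by lia. lia.
Qed.
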